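(* Let $\mathcal C$ be a clustering problem (with $|\mathcal X|\ge2$), let $t\in\mathbb N$, and let $N_1,\dots,N_K\ge1$ be integers with $\sum_iN_i=t$. For each $i\in[K]$ let $\tilde x_i=(\tilde x_{i,1},\dots,\tilde x_{i,N_i})\in\mathcal X^{N_i}$, let $\hat P_i$ be its empirical distribution, $\hat P=(\hat P_1,\dots,\hat P_K)$, and $w=(N_1/t,\dots,N_K/t)$. For $\sigma\in\mathcal C$ let $L_\sigma=\sup_{Q\in\Lambda_\sigma}\prod_{i=1}^K\prod_{n=1}^{N_i}Q_i(\tilde x_{i,n})$, and for $\sigma_1,\sigma_2\in\mathcal C$ let $Z_{\sigma_1,\sigma_2}=\log\frac{L_{\sigma_1}}{L_{\sigma_2}}$. Let $\hat\sigma\in\arg\min_{\sigma\in\mathcal C}g_{\hat P}^\sigma(w)$. Then each $L_\sigma\in(0,\infty)$ and $$\max_{\sigma\in\mathcal C}\min_{\sigma'\in\mathcal C\setminus\{\sigma\}}Z_{\sigma,\sigma'}=t\,G_{\hat P}^{\hat\sigma}(w)-t\,g_{\hat P}^{\hat\sigma}(w),$$ and the maximum on the left-hand side is attained at $\sigma=\hat\sigma$.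
   Context: Framework. Let $\mathcal X$ be a finite alphabet with $|\mathcal X|\ge2$, $\mathcal P(\mathcal X)$ the set of probability distributions on $\mathcal X$, and $K\ge2$ an integer (number of arms); $[n]=\{1,\dots,n\}$. A hypothesis is a collection $\sigma=\{\mathcal A_1^\sigma,\dots,\mathcal A_{M_\sigma}^\sigma\}$ ($M_\sigma\ge1$) of pairwise disjoint subsets of $[K]$, each of cardinality at least 2 (clusters); let $\mathcal A^\sigma_{M_\sigma+1}=[K]\setminus\bigcup_{m\le M_\sigma}\mathcal A_m^\sigma$ (unconstrained group, possibly empty). $\Lambda_\sigma$ is the set of $P\in\mathcal P(\mathcal X)^K$ with $P_i=P_j$ whenever $i,j\in\mathcal A_m^\sigma$ for some $m\le M_\sigma$, and $P_i\neq P_j$ whenever $i\in\mathcal A_{m_1}^\sigma$, $j\in\mathcal A_{m_2}^\sigma$ with $m_1\ne m_2\in[M_\sigma+1]$. A clustering problem is a finite set $\mathcal C$ of hypotheses with $|\mathcal C|\ge2$. Functions. $D(P\|Q)$ is the KL divergence. For $\mathcal A\subseteq[K]$, $G(P_{\mathcal A},w_{\mathcal A})=0$ if $w_i=0$ for all $i\in\mathcal A$, and otherwise $G(P_{\mathcal A},w_{\mathcal A})=\sum_{i\in\mathcal A}w_iD(P_i\|W)$ with $W=\sum_{i\in\mathcal A}w_iP_i/\sum_{i\in\mathcal A}w_i$. For $\sigma\in\mathcal C$, $g_P^\sigma(w)=\sum_{m=1}^{M_\sigma}G(P_{\mathcal A_m^\sigma},w_{\mathcal A_m^\sigma})$ and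 $G_P^\sigma(w)=\min_{\sigma'\in\mathcal C\setminus\{\sigma\}}g_P^{\sigma'}(w)$. The empirical distribution of $x^n$ is $\hat P_{x^n}(a)=\frac1n\sum_{k=1}^n1\{x_k=a\}$. *)

From HB Require Import structures.
From mathcomp Require Import all_boot all_order all_algebra.
From mathcomp Require Import all_classical all_reals all_analysis.
Set Implicit Arguments. Unset Strict Implicit. Unset Printing Implicit Defensive.
Import Order.TTheory GRing.Theory Num.Theory.
Local Open Scope ring_scope.
Local Open Scope classical_set_scope.

Section Defs.
Variables (R : realType) (X : finType) (K : nat).

Definition is_dist (P : {ffun X -> R}) : Prop :=
  (forall a, 0 <= P a) /\ \sum_(a : X) P a = 1.

Definition is_hypothesis (s : {set {set 'I_K}}) : Prop :=
  (0 < #|s|)%N /\ finset.trivIset s /\ (forall A, A \in s -> (1 < #|A|)%N).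

Definition same_cluster (s : {set {set 'I_K}}) (i j : 'I_K) : Prop :=
  exists2 A, A \in s & (i \in A) && (j \in A).

(* i and j lie in the same group among the M+1 groups
   (clusters plus the unconstrained group [K] \ finset.cover s) *)
Definition same_group (s : {set {set 'I_K}}) (i j : 'I_K) : Prop :=
  same_cluster s i j \/ (i \notin finset.cover s /\ j \notin finset.cover s).

Definition Lambda (s : {set {set 'I_K}}) : set ('I_K -> {ffun X -> R}) :=
  [set Q | (forall i, is_dist (Q i)) /\
           (forall i j, same_cluster s i j -> Q i = Q j) /\
           (forall i j, ~ same_group s i j -> Q i <> Q j)].

(* KL divergence D(P||Q), with the convention 0 log 0 = 0 *)
Definition KL (P Q : {ffun X -> R}) : R :=
  \sum_(a | 0 < P a) P a * ln (P a / Q a).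

Definition Gfun (P : 'I_K -> {ffun X -> R}) (w : 'I_K -> R) (A : {set 'I_K}) : R :=
  if [forall i in A, w i == 0] then 0
  else let sw := \sum_(i in A) w i in
       let W : {ffun X -> R} := [ffun a => (\sum_(i in A) w i * P i a) / sw] in
       \sum_(i in A) w i * KL (P i) W.

Definition gfun (s : {set {set 'I_K}}) (P : 'I_K -> {ffun X -> R}) (w : 'I_K -> R) : R :=
  \sum_(A in s) Gfun P w A.

Definition Gmin (C : {set {set {set 'I_K}}}) (s : {set {set 'I_K}})
    (P : 'I_K -> {ffun X -> R}) (w : 'I_K -> R) : R :=
  inf [set gfun s' P w | s' in [set s' | s' \in C :\ s]].

Definition empirical (xs : seq X) : {ffun X -> R} :=
  [ffun a => (count_mem a xs)%:R / (size xs)%:R].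

Definition Lik (s : {set {set 'I_K}}) (N : 'I_K -> nat)
    (xs : forall i : 'I_K, (N i).-tuple X) : \bar R :=
  ereal_sup [set (\prod_(i < K) \prod_(x <- xs i) Q i x)%:E | Q in Lambda s].

Definition Zstat (s1 s2 : {set {set 'I_K}}) (N : 'I_K -> nat)
    (xs : forall i : 'I_K, (N i).-tuple X) : R :=
  ln (fine (Lik s1 xs) / fine (Lik s2 xs)).

Definition Zmin (C : {set {set {set 'I_K}}}) (s : {set {set 'I_K}}) (N : 'I_K -> nat)
    (xs : forall i : 'I_K, (N i).-tuple X) : R :=
  inf [set Zstat s s' xs | s' in [set s' | s' \in C :\ s]].

End Defs.

From HB Require Import structures.
From mathcomp Require Import all_boot all_order all_algebra.
From mathcomp Require Import all_classical all_reals all_analysis.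
From mathcomp Require Import ring lra.
Set Implicit Arguments. Unset Strict Implicit. Unset Printing Implicit Defensive.
Import Order.TTheory GRing.Theory Num.Theory.
Local Open Scope ring_scope.
Local Open Scope classical_set_scope.

(* Over distributions tied within each cluster, the likelihood of a
   hypothesis s is maximised by pooling the empirical distributions of each
   cluster (Gibbs' inequality), and the logarithm of that maximum is the
   empirical log-likelihood minus t * g^s(w).  The maximiser may violate the
   separation constraints of Lambda_s, but mixing in a small group-specific
   two-point distribution restores them at a likelihood cost of (1 - e)^t, so
   the supremum L_s still equals it.  Hence Z_{s,s'} = t g^{s'}(w) - t g^s(w),
   and a max-min of such differences is attained at a minimiser of g. *)

Lemma sum_count_mem (X : finType) (r : seq X) :
  (\sum_(a : X) count_mem a r)%N = size r.
Proof.
elim: r => [|x r IH]; first by rewrite big1.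
rewrite /= big_split /= IH (bigD1 x) //= eqxx big1 ?addn0 // => a.
by rewrite eq_sym => /negbTE ->.
Qed.

Lemma big_cover_split (T : finType) (V : Type) (idx : V) (op : Monoid.com_law idx)
    (P : {set {set T}}) (F : T -> V) : finset.trivIset P ->
  \big[op/idx]_(i : T) F i =
  op (\big[op/idx]_(A in P) \big[op/idx]_(i in A) F i)
     (\big[op/idx]_(i | i \notin finset.cover P) F i).
Proof. by move=> P_triv; rewrite (bigID (mem (finset.cover P))) /= -finset.big_trivIset. Qed.

Lemma mem_cover (T : finType) (P : {set {set T}}) (A : {set T}) (x : T) :
  A \in P -> x \in A -> x \in finset.cover P.
Proof. by move=> PA Ax; apply/bigcupP; exists A. Qed.

Section RealFacts.
Variable R : realType.

Lemma prodr_count_mem (X : finType) (F : X -> R) (r : seq X) :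
  \prod_(x <- r) F x = \prod_(a : X) F a ^+ count_mem a r.
Proof.
elim: r => [|x r IH]; first by rewrite big_nil; apply/esym/big1 => a _; rewrite expr0.
rewrite big_cons IH /=.
under [RHS]eq_bigr => a _ do rewrite exprD.
rewrite big_split /=; congr (_ * _).
rewrite (bigD1 x) //= eqxx expr1 big1 ?mulr1 // => a.
by rewrite eq_sym => /negbTE ->; rewrite expr0.
Qed.

Lemma prodr_pos_support (X : finType) (m : X -> nat) (F : X -> R) :
  \prod_(a : X) F a ^+ m a = \prod_(a | (0 < m a)%N) F a ^+ m a.
Proof.
rewrite [RHS]big_mkcond; apply: eq_bigr => a _; case: ifP => // /negbT.
by rewrite -eqn0Ngt => /eqP ->; rewrite expr0.
Qed.

Lemma ln_prod (I : Type) (r : seq I) (P : pred I) (F : I -> R) :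
  (forall i, P i -> 0 < F i) ->
  ln (\prod_(i <- r | P i) F i) = \sum_(i <- r | P i) ln (F i).
Proof.
move=> F_gt0; elim: r => [|x r IH]; first by rewrite !big_nil ln1.
rewrite !big_cons; case: ifP => Px //.
by rewrite lnM ?IH // posrE ?F_gt0 //; apply: prodr_gt0 => i /F_gt0.
Qed.

Lemma ln_le_subr1 (y : R) : 0 < y -> ln y <= y - 1.
Proof.
by move=> y_gt0; have := @le_ln1Dx R (y - 1); rewrite subrKC; apply; lra.
Qed.

Lemma bernoulli_ineq (e : R) (n : nat) : 0 <= e <= 1 -> 1 - e *+ n <= (1 - e) ^+ n.
Proof.
move=> /andP[e_ge0 e_le1]; elim: n => [|n IH]; first by rewrite expr0 mulr0n subr0.
rewrite exprS mulrSr.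
apply: le_trans (_ : (1 - e) * (1 - e *+ n) <= _); last by apply: ler_wpM2l; lra.
have : 0 <= e * (e *+ n) by rewrite mulr_ge0 // mulrn_wge0.
rewrite mulrBl mul1r mulrBr mulr1; lra.
Qed.

Lemma sup_attained (S : set R) (m : R) : S m -> ubound S m -> sup S = m.
Proof.
move=> Sm Sm_ub; apply/le_anti/andP; split; first by apply: ge_sup; [exists m|].
by apply: sup_upper_bound => //; split; [exists m | exists m].
Qed.

Lemma inf_attained (S : set R) (m : R) : S m -> lbound S m -> inf S = m.
Proof.
move=> Sm Sm_lb; apply/le_anti/andP; split; last by apply: lb_le_inf; [exists m|].
rewrite /inf lerNl; apply: sup_upper_bound; last by exists m.
by split; [exists (- m), m | exists (- m) => _ [y Sy <-]; rewrite lerN2 Sm_lb].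
Qed.

Lemma inf_image_argmin (T : finType) (D : {set T}) (g : T -> R) (h : R -> R) (s0 : T) :
  {homo h : x y / x <= y} -> s0 \in D -> (forall s, s \in D -> g s0 <= g s) ->
  inf [set h (g s) | s in [set s | s \in D]] = h (g s0).
Proof.
move=> h_homo Ds0 s0_min; apply: inf_attained; first by exists s0.
by move=> _ [s /= Ds <-]; apply/h_homo/s0_min.
Qed.

Lemma sup_inf_gap (T : finType) (C : {set T}) (g : T -> R) (c : R) (shat : T) :
  0 <= c -> (1 < #|C|)%N -> shat \in C -> (forall s, s \in C -> g shat <= g s) ->
  let m s := inf [set c * g s' - c * g s | s' in [set s' | s' \in C :\ s]] in
  m shat = sup [set m s | s in [set s | s \in C]] /\
  m shat = c * inf [set g s' | s' in [set s' | s' \in C :\ shat]] - c * g shat.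
Proof.
move=> c_ge0 C_gt1 C_shat shat_min m.
have m_argmin s : s \in C -> exists2 s0, s0 \in C :\ s &
    m s = c * g s0 - c * g s /\ forall s', s' \in C :\ s -> g s0 <= g s'.
  move=> Cs; have [s1 Ds1] : exists s1, s1 \in C :\ s.
    by apply/card_gt0P; rewrite (cardsD1 s C) Cs add1n ltnS in C_gt1.
  have [s0 Ds0 s0_min] := arg_minP g Ds1; exists s0 => //; split=> //.
  apply: (@inf_image_argmin _ _ _ (fun x => c * x - c * g s)) => // x y xy.
  by rewrite lerD2r ler_wpM2l.
have [s0 Ds0 [m_shat s0_min]] := m_argmin shat C_shat.
have m_shat_ge0 : 0 <= m shat.
  rewrite m_shat subr_ge0 ler_wpM2l // shat_min //.
  by move: Ds0; rewrite in_setD1 => /andP[].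
split; last by rewrite m_shat (@inf_image_argmin _ _ _ id s0).
apply/esym/sup_attained; first by exists shat.
move=> _ [s /= Cs <-]; case: (eqVneq s shat) => [-> //|s_shat].
have [s1 _ [-> s1_min]] := m_argmin s Cs.
have : g s1 <= g s by apply: le_trans (shat_min _ Cs); rewrite s1_min // !inE eq_sym s_shat.
by move=> /(ler_wpM2l c_ge0); lra.
Qed.

Lemma gibbs_counts (X : finType) (m : X -> nat) (q : X -> R) :
  (forall a, 0 <= q a) -> \sum_(a : X) q a <= 1 -> (0 < \sum_(b : X) m b)%N ->
  \prod_(a : X) q a ^+ m a <= \prod_(a : X) ((m a)%:R / (\sum_(b : X) m b)%:R) ^+ m a.
Proof.
move=> q_ge0 q_sum_le1; set T := (\sum_(b : X) m b)%N => T_gt0.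
pose p a : R := (m a)%:R / T%:R.
have p_gt0 a : (0 < m a)%N -> 0 < p a by move=> ma_gt0; rewrite divr_gt0 ?ltr0n.
have [/existsP[a /andP[ma_gt0 /eqP qa0]]|/existsPn q_gt0] :=
    boolP [exists a, (0 < m a)%N && (q a == 0)].
  rewrite (bigD1 a) //= qa0 expr0n gtn_eqF // mul0r.
  by apply: prodr_ge0 => b _; apply/exprn_ge0/divr_ge0.
have {}q_gt0 a : (0 < m a)%N -> 0 < q a.
  by move=> ma_gt0; have := q_gt0 a; rewrite ma_gt0 lt_def q_ge0 andbT.
have pX a : (0 < m a)%N -> 0 < p a ^+ m a by move/p_gt0/exprn_gt0.
have qX a : (0 < m a)%N -> 0 < q a ^+ m a by move/q_gt0/exprn_gt0.
rewrite !(prodr_pos_support m) -ler_ln ?posrE ?prodr_gt0 //.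
rewrite (ln_prod _ qX) (ln_prod _ pX) -subr_le0 -sumrB.
apply: le_trans (_ : \sum_(a | (0 < m a)%N) (T%:R * q a - (m a)%:R) <= 0).
  apply: ler_sum => a ma_gt0.
  have pa_gt0 := p_gt0 a ma_gt0; have qa_gt0 := q_gt0 a ma_gt0.
  have -> : T%:R * q a - (m a)%:R = (q a / p a - 1) *+ m a.
    rewrite -[RHS]mulr_natr mulrBl mul1r; congr (_ - _).
    by rewrite /p; field; rewrite !pnatr_eq0 -!lt0n T_gt0 ma_gt0.
  rewrite !lnXn // -mulrnBl ler_wMn2r // -ln_div ?posrE //.
  by apply/ln_le_subr1/divr_gt0.
rewrite sumrB -mulr_sumr subr_le0.
have -> : \sum_(a | (0 < m a)%N) (m a)%:R = T%:R :> R.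
  rewrite /T natr_sum [RHS](bigID (fun a => (0 < m a)%N)) /= [X in _ + X]big1 ?addr0 //.
  by move=> a; rewrite -eqn0Ngt => /eqP ->.
rewrite -[leRHS]mulr1 ler_wpM2l // (le_trans _ q_sum_le1) //.
by rewrite [leRHS](bigID (fun a => (0 < m a)%N)) /= lerDl sumr_ge0.
Qed.

Lemma mix_neq (e eta x y u v : R) :
  0 < e -> e < eta / 2 -> eta <= 1 -> eta <= `|x - y| -> 0 <= u <= 1 -> 0 <= v <= 1 ->
  (1 - e) * x + e * u != (1 - e) * y + e * v.
Proof.
move=> e_gt0 e_lt eta_le1 eta_le u01 v01; apply/negP => /eqP E.
have diff : (1 - e) * (x - y) = e * (v - u) by rewrite !mulrBr; lra.
have : `|(1 - e) * (x - y)| <= e.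
  rewrite diff normrM gtr0_norm //; apply: ler_piMr; first exact: ltW.
  by rewrite ler_norml; lra.
rewrite normrM ger0_norm; last lra.
nra.
Qed.

Lemma dist01 (X : finType) (P : {ffun X -> R}) a : is_dist P -> 0 <= P a <= 1.
Proof. by case=> P_ge0 <-; rewrite P_ge0 (bigD1 a) //= lerDl sumr_ge0. Qed.

Lemma mix_dist (X : finType) (P Q : {ffun X -> R}) e : 0 <= e <= 1 ->
  is_dist P -> is_dist Q -> is_dist [ffun a => (1 - e) * P a + e * Q a].
Proof.
move=> /andP[e_ge0 e_le1] [P_ge0 P_sum] [Q_ge0 Q_sum]; split=> [a|].
  by rewrite ffunE addr_ge0 ?mulr_ge0 ?subr_ge0.
under eq_bigr do rewrite ffunE.
by rewrite big_split /= -!mulr_sumr P_sum Q_sum !mulr1 subrK.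
Qed.

End RealFacts.

Section MaximumLikelihood.
Variables (R : realType) (X : finType) (K : nat).
Variables (N : 'I_K -> nat) (xs : forall i : 'I_K, (N i).-tuple X).
Hypotheses (K_gt0 : (0 < K)%N) (N_gt0 : forall i, (0 < N i)%N).

Let n i a := count_mem a (xs i).
Let tot := (\sum_(i < K) N i)%N.
Let Phat i : {ffun X -> R} := empirical R (xs i).
Let w i : R := (N i)%:R / tot%:R.

Definition pooled (A : {set 'I_K}) : {ffun X -> R} :=
  [ffun a => (\sum_(i in A) w i * Phat i a) / \sum_(i in A) w i].

(* Arms outside every cluster are unconstrained, so each is fitted alone. *)
Definition group (s : {set {set 'I_K}}) i : {set 'I_K} :=
  if i \in finset.cover s then finset.pblock s i else [set i]%SET.

Definition mle s i : {ffun X -> R} := pooled (group s i).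

Definition mle_lik s : R := \prod_(i < K) \prod_(a : X) mle s i a ^+ n i a.

Lemma tot_gt0 : (0 < tot)%N.
Proof. by rewrite /tot (bigD1 (Ordinal K_gt0)) // ltn_addr. Qed.

Lemma sum_n i : (\sum_(a : X) n i a)%N = N i.
Proof. by rewrite sum_count_mem size_tuple. Qed.

Lemma PhatE i a : Phat i a = (n i a)%:R / (N i)%:R.
Proof. by rewrite ffunE size_tuple. Qed.

Lemma Phat_gt0 i a : (0 < Phat i a) = (0 < n i a)%N.
Proof.
rewrite PhatE; have [->|n_gt0] := posnP (n i a); first by rewrite mul0r ltxx.
by rewrite divr_gt0 ?ltr0n.
Qed.

Lemma pooledE A a :
  pooled A a = (\sum_(i in A) n i a)%:R / (\sum_(i in A) N i)%:R.
Proof.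
have tot_neq0 : tot%:R != 0 :> R by rewrite pnatr_eq0 -lt0n tot_gt0.
rewrite ffunE; have -> : \sum_(i in A) w i * Phat i a = (\sum_(i in A) n i a)%:R / tot%:R.
  rewrite natr_sum mulr_suml; apply: eq_bigr => i _; rewrite /w PhatE.
  by field; rewrite tot_neq0 pnatr_eq0 -lt0n N_gt0.
have -> : \sum_(i in A) w i = (\sum_(i in A) N i)%:R / tot%:R.
  by rewrite natr_sum mulr_suml.
by rewrite invf_div mulrA divfK.
Qed.

Lemma pooled1 i : pooled [set i]%SET = Phat i.
Proof. by apply/ffunP => a; rewrite pooledE !big_set1 PhatE. Qed.

Lemma mem_group s i : i \in group s i.
Proof. by rewrite /group; case: ifPn => [iC|_]; rewrite ?mem_pblock ?set11. Qed.

Lemma group_cluster s A i : finset.trivIset s -> A \in s -> i \in A -> group s i = A.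
Proof. by move=> s_triv sA Ai; rewrite /group (mem_cover sA Ai) (def_pblock s_triv sA Ai). Qed.

Lemma group_uncovered s i : i \notin finset.cover s -> group s i = [set i]%SET.
Proof. by rewrite /group => /negbTE ->. Qed.

Lemma mle_cluster s A i : finset.trivIset s -> A \in s -> i \in A -> mle s i = pooled A.
Proof. by move=> s_triv sA Ai; rewrite /mle (group_cluster s_triv sA Ai). Qed.

Lemma mle_uncovered s i : i \notin finset.cover s -> mle s i = Phat i.
Proof. by move=> iNC; rewrite /mle group_uncovered // pooled1. Qed.

Lemma sum_N_gt0 (A : {set 'I_K}) i : i \in A -> (0 < \sum_(j in A) N j)%N.
Proof. by move=> Ai; rewrite (bigD1 i) // ltn_addr. Qed.

Lemma pooled_dist (A : {set 'I_K}) i : i \in A -> is_dist (pooled A).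
Proof.
move=> Ai; split=> [a|]; first by rewrite pooledE divr_ge0.
under eq_bigr do rewrite pooledE.
rewrite -mulr_suml -natr_sum exchange_big /=.
under eq_bigr do rewrite sum_n.
by rewrite divff // pnatr_eq0 -lt0n (sum_N_gt0 Ai).
Qed.

Lemma mle_dist s i : is_dist (mle s i).
Proof. exact: pooled_dist (mem_group s i). Qed.

Lemma mle_gt0 s i a : (0 < n i a)%N -> 0 < mle s i a.
Proof.
move=> n_gt0; rewrite /mle pooledE divr_gt0 ?ltr0n ?(sum_N_gt0 (mem_group s i)) //.
by rewrite (bigD1 i) ?mem_group // ltn_addr.
Qed.

Lemma mle_lik_gt0 s : 0 < mle_lik s.
Proof.
apply: prodr_gt0 => i _; rewrite prodr_pos_support.
by apply: prodr_gt0 => a /(mle_gt0 s)/exprn_gt0.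
Qed.

Lemma prod_counts_pool (A : {set 'I_K}) (F : X -> R) :
  \prod_(j in A) \prod_(a : X) F a ^+ n j a = \prod_(a : X) F a ^+ (\sum_(j in A) n j a).
Proof. by rewrite exchange_big; apply: eq_bigr => a _; rewrite prodrXr. Qed.

Lemma pooled_lik_max (A : {set 'I_K}) i (Q : {ffun X -> R}) : i \in A -> is_dist Q ->
  \prod_(j in A) \prod_(a : X) Q a ^+ n j a <=
  \prod_(j in A) \prod_(a : X) pooled A a ^+ n j a.
Proof.
move=> Ai [Q_ge0 Q_sum]; rewrite !prod_counts_pool.
have sum_pool : (\sum_(a : X) \sum_(j in A) n j a)%N = (\sum_(j in A) N j)%N.
  by rewrite exchange_big; apply: eq_bigr => j _; rewrite sum_n.
under [leRHS]eq_bigr do rewrite pooledE -sum_pool.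
apply: gibbs_counts => //; first by rewrite Q_sum.
by rewrite sum_pool (sum_N_gt0 Ai).
Qed.

Lemma lik_le_mle_lik s (Q : 'I_K -> {ffun X -> R}) : is_hypothesis s ->
  (forall i, is_dist (Q i)) -> (forall i j, same_cluster s i j -> Q i = Q j) ->
  \prod_(i < K) \prod_(x <- xs i) Q i x <= mle_lik s.
Proof.
move=> [_ [s_triv s_card]] Q_dist Q_cluster.
have lik_ge0 (F : {ffun X -> R}) i :
    (forall a, 0 <= F a) -> 0 <= \prod_(a : X) F a ^+ n i a.
  by move=> F_ge0; apply: prodr_ge0 => a _; apply: exprn_ge0.
have Q_ge0 i : forall a, 0 <= Q i a by case: (Q_dist i).
under eq_bigr do rewrite prodr_count_mem.
rewrite /mle_lik !(big_cover_split _ _ s_triv).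
apply: ler_pM.
- by do 2!(apply: prodr_ge0 => ? _); apply: lik_ge0.
- by apply: prodr_ge0 => i _; apply: lik_ge0.
- apply: ler_prod => A sA; apply/andP; split.
    by apply: prodr_ge0 => i _; apply: lik_ge0.
  have /card_gt0P[j Aj] : (0 < #|A|)%N by apply: ltn_trans (s_card A sA).
  rewrite (eq_bigr (fun i => \prod_(a : X) Q j a ^+ n i a)) => [|i Ai]; last first.
    by rewrite (Q_cluster i j) //; exists A; rewrite ?Ai ?Aj.
  rewrite [leRHS](eq_bigr (fun i => \prod_(a : X) pooled A a ^+ n i a)) => [|i Ai].
    exact: pooled_lik_max Aj (Q_dist j).
  by rewrite (mle_cluster s_triv sA Ai).
- apply: ler_prod => i iNC; rewrite lik_ge0 //= mle_uncovered // -pooled1.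
  by have := pooled_lik_max (set11 i) (Q_dist i); rewrite !big_set1.
Qed.

Definition emp_loglik : R :=
  \sum_(i < K) \sum_(a | (0 < n i a)%N) (n i a)%:R * ln (Phat i a).

Lemma tot_Gfun (A : {set 'I_K}) i : i \in A ->
  tot%:R * Gfun Phat w A =
  \sum_(j in A) \sum_(a | (0 < n j a)%N) (n j a)%:R * ln (Phat j a / pooled A a).
Proof.
move=> Ai; have tot_neq0 : tot%:R != 0 :> R by rewrite pnatr_eq0 -lt0n tot_gt0.
have Nj_neq0 j : (N j)%:R != 0 :> R by rewrite pnatr_eq0 -lt0n N_gt0.
rewrite /Gfun ifF; last first.
  apply/negbTE/forall_inPn; exists i => //.
  by rewrite mulf_eq0 invr_eq0 (negbTE tot_neq0) (negbTE (Nj_neq0 i)).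
rewrite -/(pooled A) mulr_sumr; apply: eq_bigr => j _.
rewrite /KL (eq_bigl _ _ (Phat_gt0 j)) !mulr_sumr; apply: eq_bigr => a _.
by rewrite mulrA mulrA /w PhatE; congr (_ * _); field; rewrite tot_neq0 Nj_neq0.
Qed.

Lemma ln_mle_lik s : is_hypothesis s ->
  ln (mle_lik s) = emp_loglik - tot%:R * gfun s Phat w.
Proof.
move=> [_ [s_triv s_card]].
pose D i := \sum_(a | (0 < n i a)%N) (n i a)%:R * ln (Phat i a / mle s i a).
have ln_lik : ln (mle_lik s) =
    \sum_(i < K) \sum_(a | (0 < n i a)%N) (n i a)%:R * ln (mle s i a).
  rewrite ln_prod => [|i _]; last first.
    by rewrite prodr_pos_support; apply: prodr_gt0 => a /(mle_gt0 s)/exprn_gt0.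
  apply: eq_bigr => i _; rewrite prodr_pos_support ln_prod => [|a /(mle_gt0 s)/exprn_gt0 //].
  by apply: eq_bigr => a /(mle_gt0 s) ?; rewrite lnXn // mulr_natl.
have gfun_D : tot%:R * gfun s Phat w = \sum_(i < K) D i.
  rewrite (big_cover_split _ _ s_triv) /= [X in _ + X]big1 => [|i iNC]; last first.
    by apply: big1 => a n_gt0; rewrite mle_uncovered // divff ?ln1 ?mulr0 // lt0r_neq0 ?Phat_gt0.
  rewrite addr0 /gfun mulr_sumr; apply: eq_bigr => A sA.
  have /card_gt0P[i Ai] : (0 < #|A|)%N by apply: ltn_trans (s_card A sA).
  rewrite (tot_Gfun Ai); apply: eq_bigr => j Aj.
  by rewrite /D (mle_cluster s_triv sA Aj).
rewrite ln_lik gfun_D /emp_loglik /D -sumrB; apply: eq_bigr => i _.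
rewrite -sumrB; apply: eq_bigr => a n_gt0.
by rewrite ln_div ?posrE ?Phat_gt0 ?mle_gt0 // mulrBr opprB addrC subrK.
Qed.

Variables (a0 a1 : X).
Hypothesis a0_neq_a1 : a0 != a1.

(* Distinct weights at [a0] separate groups whose pooled distributions coincide. *)
Definition tag (k : 'I_K) : R := k%:R / K%:R.

Definition tag_dist (k : 'I_K) : {ffun X -> R} :=
  [ffun a => (a == a0)%:R * tag k + (a == a1)%:R * (1 - tag k)].

Lemma tag_inj : injective tag.
Proof.
move=> k k' /(mulIf _); rewrite invr_eq0 pnatr_eq0 -lt0n K_gt0 => /(_ isT) /eqP.
by rewrite eqr_nat => /eqP /val_inj.
Qed.

Lemma tag_dist_dist k : is_dist (tag_dist k).
Proof.
have tag_ge0 : 0 <= tag k by rewrite divr_ge0.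
have tag_le1 : tag k <= 1 by rewrite ler_pdivrMr ?ltr0n // mul1r ler_nat ltnW.
split=> [a|]; first by rewrite ffunE addr_ge0 ?mulr_ge0 ?subr_ge0.
have sum_eq (b : X) : \sum_(a : X) ((a == b)%:R : R) = 1.
  by rewrite (bigD1 b) //= eqxx big1 ?addr0 // => a /negbTE ->.
under eq_bigr do rewrite ffunE.
by rewrite big_split /= -!mulr_suml !sum_eq !mul1r subrKC.
Qed.

Lemma tag_dist_a0 k : tag_dist k a0 = tag k.
Proof. by rewrite ffunE eqxx (negbTE a0_neq_a1) mul1r mul0r addr0. Qed.

Definition rep s i : 'I_K := odflt i [pick j in group s i].

Lemma rep_group s i : rep s i \in group s i.
Proof. by rewrite /rep; case: pickP => [//|/(_ i)]; rewrite /= mem_group. Qed.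

Lemma rep_eq s i j : group s i = group s j -> rep s i = rep s j.
Proof.
rewrite /rep => ->; case: pickP => [//|/(_ j)].
by rewrite /= mem_group.
Qed.

Lemma group_same_cluster s i j : finset.trivIset s -> same_cluster s i j ->
  group s i = group s j.
Proof. by move=> s_triv [A sA /andP[Ai Aj]]; rewrite !(group_cluster s_triv sA). Qed.

Lemma rep_neq s i j : finset.trivIset s -> ~ same_group s i j -> rep s i != rep s j.
Proof.
move=> s_triv ij_sep; apply/eqP => rep_ij; apply: ij_sep.
have := rep_group s i; have := rep_group s j; rewrite rep_ij /group.
case: ifPn => jC; case: ifPn => iC.
- move=> rj ri; left; exists (finset.pblock s i); first exact: pblock_mem.
  rewrite mem_pblock iC -(same_pblock s_triv ri) (same_pblock s_triv rj).
  by rewrite mem_pblock.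
- move=> /(mem_cover (pblock_mem jC)) rC /set1P ri.
  by rewrite ri (negbTE iC) in rC.
- by move=> /set1P -> /(mem_cover (pblock_mem iC)); rewrite (negbTE jC).
- by right.
Qed.

Definition perturbed s e i : {ffun X -> R} :=
  [ffun a => (1 - e) * mle s i a + e * tag_dist (rep s i) a].

Lemma perturbedE s e i a :
  perturbed s e i a = (1 - e) * mle s i a + e * tag_dist (rep s i) a.
Proof. by rewrite ffunE. Qed.

(* A product of the nonzero gaps, each in (0, 1], is below each of them. *)
Definition mle_gap s : R :=
  \prod_(p : 'I_K * 'I_K * X | mle s p.1.1 p.2 != mle s p.1.2 p.2)
    `|mle s p.1.1 p.2 - mle s p.1.2 p.2|.

Lemma mle_gap_factor s i j a : 0 <= `|mle s i a - mle s j a| <= 1.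
Proof.
have /andP[? ?] := dist01 a (mle_dist s i); have /andP[? ?] := dist01 a (mle_dist s j).
by rewrite normr_ge0 ler_norml; apply/andP; split; lra.
Qed.

Lemma mle_gap_gt0 s : 0 < mle_gap s.
Proof. by apply: prodr_gt0 => p; rewrite normr_gt0 subr_eq0. Qed.

Lemma mle_gap_le1 s : mle_gap s <= 1.
Proof. by apply: prodr_ile1 => p _; apply: mle_gap_factor. Qed.

Lemma mle_gap_le s i j a : mle s i a != mle s j a -> mle_gap s <= `|mle s i a - mle s j a|.
Proof.
move=> ij_a; rewrite /mle_gap (bigD1 (i, j, a)) //= -[leRHS]mulr1 ler_wpM2l //.
by apply: prodr_ile1 => p _; apply: mle_gap_factor.
Qed.

Lemma perturbed_Lambda s e : is_hypothesis s -> 0 < e -> e < mle_gap s / 2 ->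
  Lambda s (perturbed s e).
Proof.
move=> [_ [s_triv _]] e_gt0 e_lt; have := mle_gap_le1 s => gap_le1.
split; [|split].
- by move=> i; apply: mix_dist; [apply/andP; split; lra|apply: mle_dist|apply: tag_dist_dist].
- move=> i j /(group_same_cluster s_triv) ij_group.
  by apply/ffunP => a; rewrite !perturbedE /mle ij_group (rep_eq ij_group).
- move=> i j /(rep_neq s_triv) rep_ij pert_ij.
  have [mle_ij|mle_ij] := eqVneq (mle s i) (mle s j).
    move/(congr1 (fun P : {ffun X -> R} => P a0)): pert_ij.
    rewrite !perturbedE mle_ij !tag_dist_a0 => /addrI /(mulfI (lt0r_neq0 e_gt0)) /tag_inj.
    exact/eqP.
  have [a mle_ij_a] : exists a, mle s i a != mle s j a.
    apply/existsP; apply: contraNT mle_ij => /existsPn mle_ij.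
    by apply/eqP/ffunP => a; apply/eqP; rewrite -[_ == _]negbK mle_ij.
  move/(congr1 (fun P : {ffun X -> R} => P a)): pert_ij; rewrite !perturbedE => /eqP.
  apply/negP; apply: mix_neq e_gt0 e_lt gap_le1 (mle_gap_le mle_ij_a) _ _;
    exact/dist01/tag_dist_dist.
Qed.

Lemma perturbed_lik s e : 0 <= e <= 1 ->
  (1 - e) ^+ tot * mle_lik s <= \prod_(i < K) \prod_(x <- xs i) perturbed s e i x.
Proof.
move=> /andP[e_ge0 e_le1].
have mle_ge0 i a : 0 <= mle s i a by case/andP: (dist01 a (mle_dist s i)).
have tag_ge0 i a : 0 <= tag_dist (rep s i) a by case/andP: (dist01 a (tag_dist_dist (rep s i))).
have -> : (1 - e) ^+ tot * mle_lik s =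
    \prod_(i < K) \prod_(x <- xs i) ((1 - e) * mle s i x).
  rewrite /mle_lik /tot -prodrXr -big_split; apply: eq_bigr => i _.
  have cst : \prod_(x <- xs i) (1 - e) = (1 - e) ^+ N i.
    by rewrite prodr_count_mem prodrXr sum_count_mem size_tuple.
  by rewrite big_split /= cst (prodr_count_mem (mle s i)).
apply: ler_prod => i _; rewrite prodr_ge0 => [|x _]; last by rewrite mulr_ge0 ?subr_ge0.
apply: ler_prod => x _; rewrite mulr_ge0 ?subr_ge0 //=.
by rewrite perturbedE lerDl mulr_ge0.
Qed.

Lemma lik_near_mle s d : is_hypothesis s -> 0 < d ->
  exists2 Q, Lambda s Q & mle_lik s - d <= \prod_(i < K) \prod_(x <- xs i) Q i x.
Proof.
move=> s_hyp d_gt0; set M := mle_lik s; set T : R := tot%:R.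
have M_ge0 : 0 <= M := ltW (mle_lik_gt0 s).
have TM_gt0 : 0 < T * M + 1 by rewrite ltr_wpDl ?mulr_ge0.
pose e := Num.min (mle_gap s / 4) (d / (T * M + 1)).
have gap_gt0 := mle_gap_gt0 s; have gap_le1 := mle_gap_le1 s.
have e_gt0 : 0 < e by rewrite lt_min !divr_gt0.
have e_le_gap : e <= mle_gap s / 4 by rewrite ge_min lexx.
have e_le_d : e * (T * M + 1) <= d by rewrite -ler_pdivlMr // ge_min lexx orbT.
exists (perturbed s e); first by apply: perturbed_Lambda => //; lra.
apply: le_trans (perturbed_lik _ _); last by apply/andP; split; lra.
apply: le_trans (_ : (1 - e *+ tot) * M <= _); last first.
  by apply: ler_wpM2r => //; apply: bernoulli_ineq; apply/andP; split; lra.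
rewrite -mulr_natr -/T mulrBl mul1r -mulrA.
have : e * (T * M) <= e * (T * M + 1) by apply: ler_wpM2l; lra.
lra.
Qed.

Lemma Lik_mle s : is_hypothesis s -> Lik R s xs = (mle_lik s)%:E.
Proof.
move=> s_hyp.
have Lik_le : (Lik R s xs <= (mle_lik s)%:E)%E.
  apply: ge_ereal_sup => _ [Q [Q_dist [Q_cluster _]] <-].
  by rewrite lee_fin lik_le_mle_lik.
have Lik_ge d : 0 < d -> ((mle_lik s - d)%:E <= Lik R s xs)%E.
  move=> d_gt0; have [Q Q_Lambda Q_lik] := lik_near_mle s_hyp d_gt0.
  rewrite -lee_fin in Q_lik; apply: le_trans Q_lik _.
  by apply: ereal_sup_ubound; exists Q.
move: Lik_le Lik_ge; case: (Lik R s xs) => [r||] // r_le r_ge; last first.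
  by have := r_ge 1 ltr01.
congr EFin; apply/le_anti/andP; split; first by rewrite -lee_fin.
by apply/ler_addgt0Pr => d d_gt0; have := r_ge d d_gt0; rewrite lee_fin; lra.
Qed.

Lemma Zstat_gfun s1 s2 : is_hypothesis s1 -> is_hypothesis s2 ->
  Zstat R s1 s2 xs = tot%:R * gfun s2 Phat w - tot%:R * gfun s1 Phat w.
Proof.
move=> s1_hyp s2_hyp.
rewrite /Zstat !Lik_mle //= ln_div ?posrE ?mle_lik_gt0 // !ln_mle_lik //.
by rewrite opprB addrC addrA subrK.
Qed.

End MaximumLikelihood.

Unset Implicit Arguments.

Theorem mainTheorem10 (R : realType) (X : finType) (K : nat)
    (C : {set {set {set 'I_K}}})
    (t : nat) (N : 'I_K -> nat) (xs : forall i : 'I_K, (N i).-tuple X)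
    (shat : {set {set 'I_K}}) :
  (1 < #|X|)%N -> (1 < K)%N ->
  (1 < #|C|)%N -> (forall s, s \in C -> is_hypothesis s) ->
  (forall i, (0 < N i)%N) -> t = (\sum_(i < K) N i)%N ->
  let Phat : 'I_K -> {ffun X -> R} := fun i => empirical R (xs i) in
  let w : 'I_K -> R := fun i => (N i)%:R / t%:R in
  shat \in C -> (forall s, s \in C -> gfun shat Phat w <= gfun s Phat w) ->
  (forall s, s \in C -> (0 < Lik R s xs)%E /\ (Lik R s xs < +oo)%E) /\
  sup [set Zmin R C s xs | s in [set s | s \in C]]
    = t%:R * Gmin C shat Phat w - t%:R * gfun shat Phat w /\
  Zmin R C shat xs = sup [set Zmin R C s xs | s in [set s | s \in C]].
Proof.
move=> X_gt1 K_gt1 C_gt1 C_hyp N_gt0 -> Phat w C_shat shat_min.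
have K_gt0 := ltnW K_gt1.
have [a0 [a1 [_ _ a0_neq_a1]]] := card_gt1P X_gt1.
set T : R := (\sum_(i < K) N i)%:R.
have Zmin_gap s : s \in C -> Zmin R C s xs =
    inf [set T * gfun s' Phat w - T * gfun s Phat w | s' in [set s' | s' \in C :\ s]].
  move=> Cs; congr inf; apply: eq_imagel => s' /=; rewrite in_setD1 => /andP[_ Cs'].
  by rewrite (Zstat_gfun R xs K_gt0 N_gt0 a0_neq_a1 (C_hyp s Cs) (C_hyp s' Cs')).
have /= [Zmin_shat_sup Zmin_shat] :=
  sup_inf_gap (g := fun s => gfun s Phat w) (c := T) (ler0n R _) C_gt1 C_shat shat_min.
have -> : [set Zmin R C s xs | s in [set s | s \in C]] =
    [set inf [set T * gfun s' Phat w - T * gfun s Phat w | s' in [set s' | s' \in C :\ s]]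
    | s in [set s | s \in C]].
  by apply: eq_imagel => s /Zmin_gap.
rewrite -Zmin_shat_sup Zmin_gap //; split; last by split; [exact: Zmin_shat|].
move=> s Cs; rewrite (Lik_mle R xs K_gt0 N_gt0 a0_neq_a1 (C_hyp s Cs)).
by rewrite lte_fin mle_lik_gt0 // ltry.
Qed.
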